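(* Let $X$ be a separable metrizable space with $\operatorname{card}(X)>1$, let $S$ be a ubiquitously dense subset of $X$, and put $\kappa=\operatorname{card}(S)$. Then there exists a family $\{A(\alpha)\}_{\alpha<\kappa}$ of subsets of $X$ such that: (1) each $A(\alpha)$ is countable; (2) each $A(\alpha)$ is dense in $X$; (3) $A(\alpha)\cap A(\beta)=\emptyset$ whenever $\alpha\neq\beta$; (4) $S=\bigcup_{\alpha<\kappa}A(\alpha)$.
   Context: A subset $S$ of a topological space $X$ is ubiquitously dense if $\operatorname{card}(U\cap S)=\operatorname{card}(S)$ for every non-empty open subset $U$ of $X$. Cardinals are identified with initial ordinals, so $\alpha<\kappa$ ranges over ordinals less than $\kappa$. *)

From mathcomp Require Import all_boot all_order all_algebra.
From mathcomp Require Import all_classical all_reals all_analysis.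
From Stdlib Require Import Reals.
Set Implicit Arguments. Unset Strict Implicit. Unset Printing Implicit Defensive.
Local Open Scope classical_set_scope.
Local Open Scope card_scope.

Definition metrizable (X : topologicalType) : Prop :=
  exists d : X -> X -> Rdefinitions.R,
    (forall x y, Rle 0 (d x y)) /\
    (forall x y, d x y = 0%R <-> x = y) /\
    (forall x y, d x y = d y x) /\
    (forall x y z, Rle (d x z) (Rplus (d x y) (d y z))) /\
    (forall U : set X, open U <->
       (forall x, U x -> exists e, Rlt 0 e /\ (forall y, Rlt (d x y) e -> U y))).

Definition separable (X : topologicalType) : Prop :=
  exists D : set X, countable D /\ dense D.

Definition ubiquitously_dense (X : topologicalType) (S : set X) : Prop :=
  forall U : set X, open U -> U !=set0 -> (U `&` S) #= S.

From mathcomp Require Import all_boot all_order all_algebra.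
From mathcomp Require Import all_classical all_reals all_analysis.
From mathcomp Require Import finmap.
From Stdlib Require Import Rbase Rtrigo_def Lra Cantor.
Set Implicit Arguments. Unset Strict Implicit. Unset Printing Implicit Defensive.
Local Open Scope classical_set_scope.
Local Open Scope card_scope.
(* Keeps pair codes folded when equations between tuples are injected. *)
Local Arguments Cantor.to_nat : simpl never.

(* Fix a countable pi-base [b n] of [X]; each [b n `&` S] then has the
   cardinality of [S]. Zorn's lemma gives a maximal system of disjoint
   injective sequences ("rows") whose [n]-th terms lie in [b n `&` S] and which
   are indexed by their own terms. By maximality some [b n0 `&` S] has only
   finitely many points outside the rows, and a nonempty ubiquitously dense set
   is infinite since [X] is T1 with two points, so there are at least as many
   rows as points of [S]. Each row meets every [b n], hence is dense; the points
   of [S] outside the rows are then added injectively, one per row at most. *)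

Lemma card_le_funP {T U : Type} {A : set T} {B : set U} (f0 : T -> U) :
  A #<= B <-> exists2 f : T -> U, set_fun A B f & set_inj A f.
Proof.
split; last by move=> /injfunPex [f]; exact: inj_card_le.
move=> /card_leP [g].
pose f x := if pselect (A x) is left Ax then val (g (exist _ x (mem_set Ax))) else f0 x.
exists f.
  by move=> x Ax; rewrite /f; case: pselect => // {}Ax; exact: set_mem (valP (g _)).
move=> x y /set_mem Ax /set_mem Ay; rewrite /f.
case: pselect => // {}Ax; case: pselect => // {}Ay.
move=> /val_inj /(@inj _ _ _ g) => /(_ (in_setT _) (in_setT _)).
by move=> /(congr1 val).
Qed.

Lemma countableU (T : Type) (A B : set T) :
  countable A -> countable B -> countable (A `|` B).
Proof.
move=> cA cB; have -> : A `|` B = \bigcup_(b in [set: bool]) (if b then A else B).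
  apply/seteqP; split=> x; first by case=> h; [exists true | exists false].
  by case=> -[] _ h; [left | right].
by apply: bigcup_countable => // -[].
Qed.

Lemma finite_set_card_leD1 (T : choiceType) (A : set T) (a : T) :
  finite_set A -> A a -> ~ (A #<= A `\ a).
Proof.
move=> finA Aa leA.
have /fcard_eq : A #= A `\ a by apply/card_eqPle; split=> //; exact: subset_card_le.
move=> /(_ finA (finite_setD _ finA)).
rewrite fset_setD1 // (cardfsD1 a) in_fset_set // mem_set //= add1n.
by move=> /eqP; rewrite eqn_leq ltnn.
Qed.

Lemma injective_selection (T : Type) (E : nat -> set T) :
  (forall n, infinite_set (E n)) ->
  exists2 x : nat -> T, injective x & forall n, E n (x n).
Proof.
move=> Einf; have [t0 _] := infinite_setN0 (Einf 0).
have /choice [g gP] : forall p : nat * set T,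
    exists y, finite_set p.2 -> E p.1 y /\ ~ p.2 y.
  move=> [n F] /=; have [finF|infF] := pselect (finite_set F); last by exists t0 => /infF.
  by have [y [Ey Fy]] := infinite_setN0 (infinite_setD (Einf n) finF); exists y.
pose picked n := iteri n (fun m F => F `|` [set g (m, F)]) set0.
pose x n := g (n, picked n).
have picked_fin n : finite_set (picked n).
  elim: n => [|n IHn]; first exact: finite_set0.
  by rewrite /picked /= finite_setU; split=> //; exact: finite_set1.
have picked_x k n : (k < n)%N -> picked n (x k).
  elim: n => // n IHn; rewrite ltnS leq_eqVlt => /orP[/eqP ->|/IHn]; first by right.
  by left.
have x_fresh n : ~ picked n (x n) by have [] := gP (n, picked n) (picked_fin n).
exists x => [a b xab|n]; last by have [] := gP (n, picked n) (picked_fin n).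
case: (ltngtP a b) => // [ab|ba]; first by case: (x_fresh b); rewrite -xab; exact: picked_x.
by case: (x_fresh a); rewrite xab; exact: picked_x.
Qed.

Section RowSystem.
Variables (T : Type) (C : nat -> set T).

(* [R (j, n, x)] says that [x] is the [n]-th term of the row indexed by [j].
   The rows are disjoint injective sequences with [n]-th term in [C n], and
   the indices of the rows are exactly their terms: this self-indexing makes
   the number of rows equal to the size of their union without any cardinal
   arithmetic. *)
Record row_system (R : set (T * nat * T)) : Prop := RowSystem {
  row_functional : forall j n x x', R (j, n, x) -> R (j, n, x') -> x = x';
  row_term_inj : forall j j' n m x, R (j, n, x) -> R (j', m, x) -> j = j' /\ n = m;
  row_total : forall j n x m, R (j, n, x) -> exists y, R (j, m, y);
  row_term_index : forall x, (exists j n, R (j, n, x)) <-> (exists n y, R (x, n, y));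
  row_term_in : forall j n x, R (j, n, x) -> C n x }.

Definition row_index (R : set (T * nat * T)) := [set j | exists n y, R (j, n, y)].

Lemma row_system_bigcup (F : set (set (T * nat * T))) :
  F `<=` row_system -> total_on F subset -> row_system (\bigcup_(R in F) R).
Proof.
move=> Frow Ftot.
have common t1 t2 : (\bigcup_(R in F) R) t1 -> (\bigcup_(R in F) R) t2 ->
    exists2 R, F R & R t1 /\ R t2.
  move=> [R1 FR1 R1t] [R2 FR2 R2t].
  by case: (Ftot _ _ FR1 FR2) => sub; [exists R2 | exists R1] => //; split=> //; exact: sub.
split.
- move=> j n x x' h1 h2; have [R FR [Rx Rx']] := common _ _ h1 h2.
  exact (row_functional (Frow _ FR) Rx Rx').
- move=> j j' n m x h1 h2; have [R FR [Rx Rx']] := common _ _ h1 h2.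
  exact (row_term_inj (Frow _ FR) Rx Rx').
- move=> j n x m [R FR Rx].
  by have [y Ry] := row_total (Frow _ FR) m Rx; exists y, R.
- move=> x; split.
  + move=> [j [n [R FR Rx]]].
    have [n' [y Ry]] : exists n y, R (x, n, y).
      by apply/(row_term_index (Frow _ FR)); exists j, n.
    by exists n', y, R.
  + move=> [n [y [R FR Rx]]].
    have [j [n' Ry]] : exists j n, R (j, n, x).
      by apply/(row_term_index (Frow _ FR)); exists n, y.
    by exists j, n', R.
- by move=> j n x [R FR Rx]; exact (row_term_in (Frow _ FR) Rx).
Qed.

(* The new row indexed by [x a] lists the [x k] with [k] coding [(a, n)], so
   every new term is itself the index of a new row. *)
Definition fresh_rows (x : nat -> T) : set (T * nat * T) :=
  [set t | exists a n, t = (x a, n, x (Cantor.to_nat (a, n)))].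

Lemma row_system_setU_fresh (R : set (T * nat * T)) (x : nat -> T) :
  row_system R -> injective x -> (forall k, ~ row_index R (x k)) ->
  (forall k, C (Cantor.of_nat k).2 (x k)) -> row_system (R `|` fresh_rows x).
Proof.
move=> Rrow xinj xR xC.
have R_index j n y : R (j, n, y) -> row_index R y.
  by move=> Ry; apply/(row_term_index Rrow); exists j, n.
have fresh_index a (n : nat) : row_index (fresh_rows x) (x a).
  by exists n, (x (Cantor.to_nat (a, n))), a, n.
split.
- move=> j n y y' [Ry|[a [n1 [ej en ey]]]] [Ry'|[b [n2 [ej' en' ey']]]]; subst.
  + exact (row_functional Rrow Ry Ry').
  + by case: (xR b); exists n2, y.
  + by case: (xR a); exists n1, y'.
  + by move: ej' => /xinj ->.
- move=> j j' n m y [Ry|[a [n1 [-> -> ey]]]] [Ry'|[b [n2 [-> -> ey']]]].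
  + exact (row_term_inj Rrow Ry Ry').
  + by case: (xR (Cantor.to_nat (b, n2))); rewrite -ey'; exact: R_index Ry.
  + by case: (xR (Cantor.to_nat (a, n1))); rewrite -ey; exact: R_index Ry'.
  + move: ey'; rewrite ey => /xinj /(congr1 Cantor.of_nat).
    by rewrite !Cantor.cancel_of_to => -[-> ->].
- move=> j n y m [Ry|[a [n1 [ej _ _]]]]; subst.
  + by have [y' Ry'] := row_total Rrow m Ry; exists y'; left.
  + by exists (x (Cantor.to_nat (a, m))); right; exists a, m.
- move=> y; split.
  + move=> [j [n [Ry|[a [n1 [_ _ ->]]]]]].
    * by have [n' [y' Ry']] := R_index _ _ _ Ry; exists n', y'; left.
    * by have [n' [y' Ry']] := fresh_index (Cantor.to_nat (a, n1)) 0; exists n', y'; right.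
  + move=> [n [y' [Ry'|[a [n1 [-> _ _]]]]]].
    * have [j [n' Rj]] : exists j n, R (j, n, y).
        by apply/(row_term_index Rrow); exists n, y'.
      by exists j, n'; left.
    * exists (x (Cantor.of_nat a).1), (Cantor.of_nat a).2; right.
      exists (Cantor.of_nat a).1, (Cantor.of_nat a).2.
      by rewrite -surjective_pairing Cantor.cancel_to_of.
- move=> j n y [Ry|[a [n1 [_ -> ->]]]]; first exact (row_term_in Rrow Ry).
  by have := xC (Cantor.to_nat (a, n1)); rewrite Cantor.cancel_of_to.
Qed.

Lemma row_system_maximal :
  exists2 R, row_system R & exists n0, finite_set (C n0 `\` row_index R).
Proof.
have [R [Rrow Rmax]] := Zorn_bigcup row_system_bigcup.
exists R => //; apply: contrapT => infR.
have Cinf k : infinite_set (C (Cantor.of_nat k).2 `\` row_index R).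
  by move=> finC; apply: infR; exists (Cantor.of_nat k).2.
have [x xinj xC] := injective_selection Cinf.
have xR k : ~ row_index R (x k) by have [] := xC k.
apply: (Rmax (R `|` fresh_rows x)).
  split=> [|sub]; first exact: subsetUl.
  apply: (xR 0); exists 0, (x (Cantor.to_nat (0, 0))).
  by apply: sub; right; exists 0, 0.
by apply: row_system_setU_fresh => // k; have [] := xC k.
Qed.

End RowSystem.

Section Rows.
Variables (T : Type) (C : nat -> set T) (R : set (T * nat * T)).
Hypothesis Rrow : row_system C R.
Local Notation J := (row_index R).

Lemma row_ex j n : exists y, (exists y', R (j, n, y')) -> R (j, n, y).
Proof. by have [[y Ry]|nR] := pselect (exists y, R (j, n, y)); [exists y | exists j]. Qed.

Definition row j n := projT1 (cid (row_ex j n)).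

Lemma rowP j n : J j -> R (j, n, row j n).
Proof.
move=> [n' [y Ry]]; apply: (projT2 (cid (row_ex j n))).
exact (row_total Rrow n Ry).
Qed.

Lemma row_index_row j n : J j -> J (row j n).
Proof. by move=> Jj; apply/(row_term_index Rrow); exists j, n; exact: rowP. Qed.

Lemma row_in j n : J j -> C n (row j n).
Proof. by move=> Jj; exact (row_term_in Rrow (rowP n Jj)). Qed.

Lemma row_inj j j' n m : J j -> J j' -> row j n = row j' m -> j = j' /\ n = m.
Proof.
move=> Jj Jj' e; apply: (row_term_inj Rrow (rowP n Jj)).
by rewrite e; exact: rowP.
Qed.

Lemma row_index_cover y : J y -> exists2 j, J j & exists n, row j n = y.
Proof.
move=> /(row_term_index Rrow) [j [n Ry]]; have Jj : J j by exists n, y.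
by exists j => //; exists n; exact (row_functional Rrow (rowP n Jj) Ry).
Qed.

Lemma row_index_card_ge n0 :
  infinite_set (C n0) -> finite_set (C n0 `\` J) -> C n0 #<= J.
Proof.
move=> infC finD.
have [j0 Jj0] : J !=set0.
  by apply/set0P/eqP => J0; apply: infC; rewrite -(setD0 (C n0)) -J0.
have /countable_injP [g ginj] := finite_set_countable finD.
pose f y := if pselect (J y) then row y 0 else row j0 (g y).+1.
apply/(card_le_funP id); exists f.
  by move=> y _; rewrite /f; case: pselect => Jy; exact: row_index_row.
move=> y y' /set_mem Cy /set_mem Cy'; rewrite /f.
case: pselect => Jy; case: pselect => Jy' e.
- by case: (row_inj Jy Jy' e).
- by case: (row_inj Jy Jj0 e).
- by case: (row_inj Jj0 Jy' e).
- by case: (row_inj Jj0 Jj0 e) => _ [] /ginj; apply; exact/mem_set.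
Qed.

Lemma row_index_sub (S : set T) : (forall n, C n `<=` S) -> J `<=` S.
Proof. by move=> CS y /row_index_cover [j Jj [n <-]]; apply: (CS n); exact: row_in. Qed.

(* The part [extra j] of [S] outside [J] attached to row [j] has at most one
   point, as [h] is injective. *)
Lemma row_partition (S : set T) : (forall n, C n `<=` S) -> S #<= J ->
  exists (I : Type) (A : I -> set T),
    [/\ [set: I] #= S, forall i, countable (A i), forall i n, A i `&` C n !=set0,
        forall i i', i <> i' -> A i `&` A i' = set0 & S = \bigcup_(i in [set: I]) A i].
Proof.
move=> CS SJ; have JS := row_index_sub CS.
have [h hJ hinj] := (card_le_funP id).1 SJ.
pose extra j := [set s | S s /\ ~ J s /\ h s = j].
pose A (i : J) := range (row (val i)) `|` extra (val i).
have iJ (i : J) : J (val i) by exact: set_mem (valP i).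
exists J, A; split.
- apply: card_eq_trans (card_setT J) _.
  by apply/card_eqPle; split=> //; exact: subset_card_le.
- move=> i; apply: countableU; first exact: sub_countable (card_image_le _ _) _.
  apply: (@sub_countable _ _ _ [set val i]) (countable1 _).
  apply/(card_le_funP h); exists h; first by move=> s /= [_ [_ ->]].
  by move=> s s' /set_mem [Ss _] /set_mem [Ss' _]; apply: hinj; exact/mem_set.
- by move=> i n; exists (row (val i) n); split; [left; exists n | exact: row_in].
- move=> i i' ii'; apply/seteqP; split=> // s.
  move=> [[[n _ <-]|[Ss [nJs hs]]] [[m _ e]|[_ [nJs' hs']]]]; apply: ii'.
  + by apply: val_inj; case: (row_inj (iJ i) (iJ i') (esym e)).
  + by case: nJs'; exact: row_index_row.
  + by case: nJs; rewrite -e; exact: row_index_row.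
  + by apply: val_inj; rewrite -hs -hs'.
apply/seteqP; split=> [s Ss|s [i _ [[n _ <-]|[]//]]]; last exact: CS n _ (row_in n (iJ i)).
have [Js|nJs] := pselect (J s).
  have [j Jj [n jn]] := row_index_cover Js.
  by exists (exist _ j (mem_set Jj)) => //; left; exists n.
by exists (exist _ (h s) (mem_set (hJ s Ss))) => //; right.
Qed.

End Rows.

Lemma ubiquitously_dense_infinite (X : topologicalType) (S : set X) :
  accessible_space X -> (exists x y : X, x <> y) -> ubiquitously_dense S ->
  S !=set0 -> infinite_set S.
Proof.
move=> T1X [x [y xy]] udS [s Ss] finS.
have open_Cs : open (~` [set s]) by apply: closed_openC; exact: accessible_closed_set1.
have Cs_nonempty : ~` [set s] !=set0.
  by have [xs|xs] := pselect (x = s); [exists y => ys; apply: xy; rewrite xs ys | exists x].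
have /card_eqPle[_] := udS _ open_Cs Cs_nonempty.
by rewrite setIC -setDE; exact: finite_set_card_leD1.
Qed.

Section Metric.
Variables (X : topologicalType) (d : X -> X -> R).
Hypotheses (d_ge0 : forall x y, Rle 0 (d x y)) (d_eq0 : forall x y, d x y = 0%R <-> x = y).
Hypothesis d_triangle : forall x y z, Rle (d x z) (Rplus (d x y) (d y z)).
Hypothesis d_open : forall U : set X, open U <->
  (forall x, U x -> exists e, Rlt 0 e /\ (forall y, Rlt (d x y) e -> U y)).

Local Notation ball c r := [set y | Rlt (d c y) r].

Lemma open_ball c r : open (ball c r).
Proof.
apply/d_open => y /= cy; exists (Rminus r (d c y)); split; first lra.
by move=> z yz; have := d_triangle c y z; lra.
Qed.

Lemma ball_center c r : Rlt 0 r -> ball c r c.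
Proof. by rewrite /= (proj2 (d_eq0 c c) erefl). Qed.

Lemma metric_accessible : accessible_space X.
Proof.
move=> x y /eqP xy; exists (ball x (d x y)); split; first exact: open_ball.
  have dxy_neq0 : d x y <> 0%R by move/d_eq0.
  by apply/mem_set/ball_center; have := d_ge0 x y; lra.
by apply/mem_set => /=; exact: Rlt_irrefl.
Qed.

(* The balls of radius 1/(k+1) around the points of a countable dense set. *)
Lemma metric_countable_pi_base (x0 : X) : separable X ->
  exists b : nat -> set X, [/\ forall n, open (b n), forall n, b n !=set0 &
    forall O, open O -> O !=set0 -> exists n, b n `<=` O].
Proof.
move=> [D [/pfcard_geP [D0|/surjfunPex [e De]] denseD]].
  by have [] := denseD setT (ex_intro _ x0 I) openT; rewrite D0 setI0.
pose b n := ball (e (Cantor.of_nat n).1) (Rinv (INR (Cantor.of_nat n).2.+1)).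
exists b; split=> [n|n|O openO [x Ox]]; first exact: open_ball.
  exists (e (Cantor.of_nat n).1); apply: ball_center.
  by apply: Rinv_0_lt_compat; rewrite S_INR; have := pos_INR (Cantor.of_nat n).2; lra.
have [eps [eps_gt0 epsO]] := (d_open O).1 openO x Ox.
have half_gt0 : Rlt 0 (eps / 2) by lra.
have [z [xz]] := denseD _ (ex_intro _ x (ball_center x half_gt0)) (open_ball x (eps / 2)).
rewrite De => -[k _ ekz].
have [N [N_lt N_gt0]] := archimed_cor1 _ half_gt0.
exists (Cantor.to_nat (k, N.-1)) => w.
rewrite /b Cantor.cancel_of_to ekz prednK; last exact/ltP.
move=> /= zw; apply: epsO; have := d_triangle x z w; lra.
Qed.
End Metric.

Theorem theorem2p3 (X : topologicalType) (S : set X) :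
  separable X -> metrizable X ->
  (exists x y : X, x <> y) ->
  ubiquitously_dense S ->
  exists (I : Type) (A : I -> set X),
    [set: I] #= S /\
    (forall a, countable (A a)) /\
    (forall a, dense (A a)) /\
    (forall a b, a <> b -> A a `&` A b = set0) /\
    S = \bigcup_(a in [set: I]) A a.
Proof.
move=> sepX [d [d_ge0 [d_eq0 [_ [d_tri d_open]]]]] twoX udS.
have [x0 _] := twoX.
have [b [b_open b_nonempty b_pi]] := metric_countable_pi_base d_eq0 d_tri d_open x0 sepX.
pose C n := b n `&` S.
have CS n : C n #= S := udS _ (b_open n) (b_nonempty n).
have [R Rrow [n0 finC]] := row_system_maximal C.
have SR : S #<= row_index R.
  have [->|/set0P S0] := eqVneq S set0; first exact: card_ge0.
  have T1X := metric_accessible d_ge0 d_eq0 d_tri d_open.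
  have infS := ubiquitously_dense_infinite T1X twoX udS S0.
  apply: card_le_trans (row_index_card_ge Rrow _ finC); first by have /card_eqPle[] := CS n0.
  by rewrite (eq_finite_set (CS n0)).
have [I [A [IS A_countable A_meets disjA SA]]] :=
  row_partition Rrow (fun n => @subIsetr _ _ _) SR.
exists I, A; do !split=> //.
move=> i O O0 openO; have [n bnO] := b_pi O openO O0.
by have [s [Ais [bs _]]] := A_meets i n; exists s; split=> //; exact: bnO.
Qed.
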